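(* Let $\Gamma=(N,(S_i)_{i\in N},(u_i)_{i\in N})$ be a finite normal-form game with $N=\{1,\dots,n\}$. Let $\pi=(\pi_1,\dots,\pi_n)$ and $\pi'=(\pi_1',\dots,\pi_n')$ be profiles of tolerance distributions, where for each $i$ both $\pi_i$ and $\pi_i'$ are probability distributions with finite support contained in $[0,\infty)$. Suppose $\pi'$ stochastically dominates $\pi$. Then every $\pi$-tolerant equilibrium of $\Gamma$ is a $\pi'$-tolerant equilibrium of $\Gamma$.
   Context: $S_i$ is the finite set of pure strategies of player $i$, and $S=S_1\times\cdots\times S_n$. Each $u_i:S\to\mathbb{R}$ is extended multilinearly to mixed-strategy profiles. $\Sigma_i$ denotes the set of mixed strategies (probability distributions on $S_i$) of player $i$; for a profile $\sigma=(\sigma_1,\dots,\sigma_n)$, $\sigma_{-i}$ denotes the profile of all components except the $i$-th. A pure strategy $s_i$ is consistent with a tolerance $t\ge 0$ and a profile $\sigma_{-i}$ if $s_i$ is a $t$-best response to $\sigma_{-i}$, i.e., $u_i(s_i',\sigma_{-i})\le u_i(s_i,\sigma_{-i})+t$ for every $s_i'\in S_i$. Given a profile $\pi=(\pi_1,\dots,\pi_n)$, where $\pi_i$ is a distribution on a finite set $T_i\subset[0,\infty)$ of possible tolerances (''types'') of player $i$, a mixed-strategy profile $\sigma$ is a $\pi$-tolerant equilibrium if for each player $i$ there is a map $g_i$ from $T_i$ to $\Sigma_i$ such that (E1) for every $t\in T_i$, every pure strategy in the support of $g_i(t)$ is consistent with $t$ and $\sigma_{-i}$; and (E2) $\sum_{t\in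 T_i}\pi_i(t)\,g_i(t)=\sigma_i$ (as mixed strategies). For a distribution $\pi_i$, let $F^{\pi_i}(t)=\sum_{t'\le t}\pi_i(t')$. $\pi_i'$ stochastically dominates $\pi_i$ if $F^{\pi_i'}(t)\le F^{\pi_i}(t)$ for all $t$; $\pi'$ stochastically dominates $\pi$ if $\pi_i'$ stochastically dominates $\pi_i$ for every $i$. *)

From HB Require Import structures.
From mathcomp Require Import all_boot all_order all_algebra.
Set Implicit Arguments. Unset Strict Implicit. Unset Printing Implicit Defensive.
Import Order.TTheory GRing.Theory Num.Theory.
Local Open Scope ring_scope.

Definition pprofile (n : nat) (S : 'I_n -> finType) := {dffun forall i, S i}.

Definition is_mixed (R : realFieldType) (T : finType) (x : {ffun T -> R}) : Prop :=
  (forall s, 0 <= x s) /\ \sum_(s : T) x s = 1.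

(* Multilinear extension of u_i evaluated at (s_i', sigma_{-i}):
   u_i(s_i', sigma_{-i}) = sum_s [s_i = s_i'] * prod_{j<>i} sigma_j(s_j) * u_i(s). *)
Definition upure (R : realFieldType) (n : nat) (S : 'I_n -> finType)
  (u : 'I_n -> pprofile S -> R) (sigma : forall j, {ffun S j -> R})
  (i : 'I_n) (si : S i) : R :=
  \sum_(s : pprofile S)
     (if s i == si then \prod_(j < n | j != i) sigma j (s j) else 0) * u i s.

Definition consistent (R : realFieldType) (n : nat) (S : 'I_n -> finType)
  (u : 'I_n -> pprofile S -> R) (sigma : forall j, {ffun S j -> R})
  (i : 'I_n) (t : R) (si : S i) : Prop :=
  forall si' : S i, upure u sigma si' <= upure u sigma si + t.

Record tdist (R : realFieldType) := TDist { tsupp : seq R; tprob : R -> R }.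

Definition is_tdist (R : realFieldType) (p : tdist R) : Prop :=
  [/\ uniq (tsupp p),
      (forall t, t \in tsupp p -> 0 <= t),
      (forall t, t \in tsupp p -> 0 <= tprob p t) &
      \sum_(t <- tsupp p) tprob p t = 1].

Definition cdf (R : realFieldType) (p : tdist R) (t : R) : R :=
  \sum_(t' <- tsupp p | t' <= t) tprob p t'.

Definition stoch_dom (R : realFieldType) (p' p : tdist R) : Prop :=
  forall t : R, cdf p' t <= cdf p t.

Definition stoch_dom_profile (R : realFieldType) (n : nat)
  (pi' pi : 'I_n -> tdist R) : Prop :=
  forall i, stoch_dom (pi' i) (pi i).

Definition tolerant_eq (R : realFieldType) (n : nat) (S : 'I_n -> finType)
  (u : 'I_n -> pprofile S -> R) (pi : 'I_n -> tdist R)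
  (sigma : forall j, {ffun S j -> R}) : Prop :=
  (forall i, is_mixed (sigma i)) /\
  forall i : 'I_n, exists g : R -> {ffun S i -> R},
    [/\ (forall t, t \in tsupp (pi i) -> is_mixed (g t)),
        (forall t, t \in tsupp (pi i) -> forall si : S i,
            0 < g t si -> @consistent R n S u sigma i t si) &
        (forall si : S i,
            \sum_(t <- tsupp (pi i)) tprob (pi i) t * g t si = sigma i si)].

From HB Require Import structures.
From mathcomp Require Import all_boot all_order all_algebra.
From mathcomp Require Import ring lra.
Import Order.TTheory GRing.Theory Num.Theory.
Set Implicit Arguments. Unset Strict Implicit.
Local Open Scope ring_scope.

(* Each type t of a tolerance distribution occupies the
   interval [F(t) - p(t), F(t)] of [0, 1]; weighting the pair (t, t') by the
   length of the overlap of the intervals of t under pi_i and of t' under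
   pi'_i couples pi_i with pi'_i.  Stochastic dominance F' <= F places the
   interval of t' to the left of that of t whenever t' < t, so the coupling
   only moves mass from a type t to types t' >= t.  Since a t-best response is
   also a t'-best response for t <= t', redistributing the strategy g_i(t) of
   each type t along the coupling yields a type-dependent strategy for pi'_i
   that still averages to sigma_i. *)

(* The length of [a, b] :&: [c, d] when a <= b and c <= d. *)
Definition overlap (R : realFieldType) (a b c d : R) : R :=
  Num.min b d - Num.min a d - Num.min b c + Num.min a c.

Lemma overlapC (R : realFieldType) (a b c d : R) :
  overlap a b c d = overlap c d a b.
Proof. by rewrite /overlap !(minC d) !(minC c); ring. Qed.

Lemma overlap_ge0 (R : realFieldType) (a b c d : R) :
  a <= b -> c <= d -> 0 <= overlap a b c d.
Proof.
move=> ab cd; rewrite /overlap !minEle.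
by case: (leP b d); case: (leP a d); case: (leP b c); case: (leP a c) => *; lra.
Qed.

Lemma overlap_eq0 (R : realFieldType) (a b c d : R) :
  a <= b -> b <= c -> c <= d -> overlap a b c d = 0.
Proof.
move=> ab bc cd; rewrite /overlap !minEle.
by case: (leP b d); case: (leP a d); case: (leP b c); case: (leP a c) => *; lra.
Qed.

Lemma telescope_sorted_partial_sums (R : realFieldType) (p phi : R -> R) (s : seq R) :
  sorted <%R s ->
  \sum_(x <- s) (phi (\sum_(y <- s | y <= x) p y) - phi (\sum_(y <- s | y <= x) p y - p x))
    = phi (\sum_(x <- s) p x) - phi 0.
Proof.
elim: s phi => [|x s IHs] phi sorted_xs; first by rewrite !big_nil subrr.
have lt_x : all (fun y => x < y) s by apply: order_path_min sorted_xs; apply: lt_trans.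
have partial_x : \sum_(y <- x :: s | y <= x) p y = p x.
  rewrite big_cons lexx big1_seq ?addr0 // => y /andP [yx ys].
  by move/allP: lt_x => /(_ y ys); rewrite ltNge yx.
have partial_s y : y \in s ->
    \sum_(z <- x :: s | z <= y) p z = p x + \sum_(z <- s | z <= y) p z.
  by move=> ys; rewrite big_cons (ltW (allP lt_x y ys)).
rewrite big_cons partial_x subrr big_seq.
under eq_bigr => y ys do rewrite !partial_s // -addrA.
rewrite -big_seq (IHs (fun z => phi (p x + z))) ?(path_sorted sorted_xs) //.
by rewrite big_cons addr0; ring.
Qed.

Lemma telescope_partial_sums (R : realFieldType) (p phi : R -> R) (s : seq R) :
  uniq s ->
  \sum_(x <- s) (phi (\sum_(y <- s | y <= x) p y) - phi (\sum_(y <- s | y <= x) p y - p x))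
    = phi (\sum_(x <- s) p x) - phi 0.
Proof.
move=> uniq_s; have perm_s : perm_eq (sort <=%R s) s by rewrite perm_sort.
under eq_bigr do rewrite -(perm_big _ perm_s).
by rewrite -!(perm_big _ perm_s) telescope_sorted_partial_sums ?sort_lt_sorted.
Qed.

Section TypeIntervals.
Variables (R : realFieldType) (P : tdist R).
Hypothesis P_dist : is_tdist P.

Let cdf_split t t0 : t \in tsupp P ->
  cdf P t0 = (if t <= t0 then tprob P t else 0)
             + \sum_(y <- tsupp P | y != t) (if y <= t0 then tprob P y else 0).
Proof.
by case: P_dist => uniq_P _ _ _ tP; rewrite /cdf big_mkcond (bigD1_seq t).
Qed.

Lemma cdf_subr_ge0 t : t \in tsupp P -> 0 <= cdf P t - tprob P t.
Proof.
case: (P_dist) => _ _ prob_ge0 _ tP.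
rewrite (cdf_split t tP) lexx [tprob P t + _]addrC addrK big_seq_cond.
by apply: sumr_ge0 => y /andP [yP _]; case: ifP => // _; apply: prob_ge0.
Qed.

Lemma cdf_le1 t : cdf P t <= 1.
Proof.
case: (P_dist) => _ _ prob_ge0 <-.
rewrite /cdf big_mkcond /= big_seq [X in _ <= X]big_seq.
by apply: ler_sum => y yP; case: ifP => // _; apply: prob_ge0.
Qed.

Lemma cdf_lt_le t t' : t \in tsupp P -> t' < t -> cdf P t' <= cdf P t - tprob P t.
Proof.
case: (P_dist) => _ _ prob_ge0 _ tP lt_t't.
rewrite (cdf_split t tP) lexx [tprob P t + _]addrC addrK (cdf_split t' tP) (lt_geF lt_t't) add0r.
rewrite big_seq_cond [X in _ <= X]big_seq_cond.
apply: ler_sum => y /andP [yP _]; case: ifP => [yt'|_].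
  by rewrite (le_trans yt' (ltW lt_t't)).
by case: ifP => // _; apply: prob_ge0.
Qed.

Lemma type_interval_bounds t : t \in tsupp P ->
  [/\ 0 <= cdf P t - tprob P t, cdf P t - tprob P t <= cdf P t & cdf P t <= 1].
Proof.
move=> tP; case: (P_dist) => _ _ prob_ge0 _.
by rewrite cdf_subr_ge0 // cdf_le1 gerBl prob_ge0.
Qed.

(* The type intervals tile [0, 1], so their overlaps with [c, d] add up to d - c. *)
Lemma sum_overlap_type_intervals c d : 0 <= c -> c <= d -> d <= 1 ->
  \sum_(t <- tsupp P) overlap (cdf P t - tprob P t) (cdf P t) c d = d - c.
Proof.
move=> c_ge0 cd d_le1; case: (P_dist) => uniq_P _ _ sum_P.
pose phi y := Num.min y d - Num.min y c.
under eq_bigr => t _ do have -> : overlap (cdf P t - tprob P t) (cdf P t) c d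
                  = phi (cdf P t) - phi (cdf P t - tprob P t) by rewrite /phi /overlap; ring.
rewrite telescope_partial_sums // sum_P /phi.
rewrite (min_r (le_trans cd d_le1)) (min_r d_le1).
by rewrite (min_l (le_trans c_ge0 cd)) (min_l c_ge0); ring.
Qed.

End TypeIntervals.

Section QuantileCoupling.
Variables (R : realFieldType) (P P' : tdist R).
Hypotheses (P_dist : is_tdist P) (P'_dist : is_tdist P').

Definition quantile_coupling (t t' : R) : R :=
  overlap (cdf P t - tprob P t) (cdf P t) (cdf P' t' - tprob P' t') (cdf P' t').

Lemma quantile_coupling_ge0 t t' : t \in tsupp P -> t' \in tsupp P' ->
  0 <= quantile_coupling t t'.
Proof.
move=> /(type_interval_bounds P_dist) [_ le_t _].
by move=> /(type_interval_bounds P'_dist) [_ le_t' _]; apply: overlap_ge0.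
Qed.

Lemma quantile_coupling_suml t : t \in tsupp P ->
  \sum_(t' <- tsupp P') quantile_coupling t t' = tprob P t.
Proof.
move=> /(type_interval_bounds P_dist) [ge0_t le_t le1_t].
under eq_bigr do rewrite /quantile_coupling overlapC.
by rewrite sum_overlap_type_intervals // opprB addrC subrK.
Qed.

Lemma quantile_coupling_sumr t' : t' \in tsupp P' ->
  \sum_(t <- tsupp P) quantile_coupling t t' = tprob P' t'.
Proof.
move=> /(type_interval_bounds P'_dist) [ge0_t' le_t' le1_t'].
by rewrite sum_overlap_type_intervals // opprB addrC subrK.
Qed.

Lemma quantile_coupling_gt0_le (dom : stoch_dom P' P) t t' :
  t \in tsupp P -> t' \in tsupp P' -> 0 < quantile_coupling t t' -> t <= t'.
Proof.
move=> tP t'P' coupling_gt0; rewrite leNgt; apply/negP => lt_t't.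
move: coupling_gt0; rewrite /quantile_coupling overlapC overlap_eq0 ?ltxx //.
- by case: (type_interval_bounds P'_dist t'P').
- exact: le_trans (dom t') (cdf_lt_le P_dist tP lt_t't).
- by case: (type_interval_bounds P_dist tP).
Qed.

End QuantileCoupling.

Section Transport.
Variables (R : realFieldType) (T : finType) (C : R -> T -> Prop).
Variables (P P' : tdist R) (gam : R -> R -> R) (g : R -> {ffun T -> R}) (s0 : T).
Hypothesis C_mono : forall t t' s, t <= t' -> C t s -> C t' s.
Hypothesis C_s0 : forall t', t' \in tsupp P' -> C t' s0.
Hypothesis gam_ge0 : forall t t', t \in tsupp P -> t' \in tsupp P' -> 0 <= gam t t'.
Hypothesis gam_suml : forall t, t \in tsupp P ->
  \sum_(t' <- tsupp P') gam t t' = tprob P t.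
Hypothesis gam_sumr : forall t', t' \in tsupp P' ->
  \sum_(t <- tsupp P) gam t t' = tprob P' t'.
Hypothesis gam_gt0_le : forall t t', t \in tsupp P -> t' \in tsupp P' ->
  0 < gam t t' -> t <= t'.
Hypothesis g_mixed : forall t, t \in tsupp P -> is_mixed (g t).
Hypothesis g_C : forall t, t \in tsupp P -> forall s, 0 < g t s -> C t s.

(* A type t' of zero probability gets the pure strategy s0, which is
   consistent with every tolerance. *)
Definition transported (t' : R) : {ffun T -> R} :=
  if tprob P' t' == 0 then [ffun s => (s == s0)%:R]
  else [ffun s => (\sum_(t <- tsupp P) gam t t' * g t s) / tprob P' t'].

Let mass t' s := \sum_(t <- tsupp P) gam t t' * g t s.

Let mass_ge0 t' s : t' \in tsupp P' -> 0 <= mass t' s.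
Proof.
move=> t'P'; rewrite /mass big_seq; apply: sumr_ge0 => t tP.
by rewrite mulr_ge0 ?gam_ge0 //; case: (g_mixed tP).
Qed.

Let tprob'_ge0 t' : t' \in tsupp P' -> 0 <= tprob P' t'.
Proof.
by move=> t'P'; rewrite -gam_sumr // big_seq; apply: sumr_ge0 => t tP; apply: gam_ge0.
Qed.

Lemma transported_scaled t' s : t' \in tsupp P' ->
  tprob P' t' * transported t' s = mass t' s.
Proof.
move=> t'P'; rewrite /transported; case: eqP => [p0 | /eqP p_neq0].
  rewrite p0 mul0r /mass big_seq big1 // => t tP.
  have : \sum_(t <- tsupp P | t \in tsupp P) gam t t' == 0.
    by rewrite -big_seq gam_sumr ?p0.
  rewrite (psumr_eq0 _ (fun t tP => gam_ge0 tP t'P')) => /allP /(_ t tP).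
  by rewrite tP => /eqP ->; rewrite mul0r.
by rewrite ffunE mulrC mulfVK.
Qed.

Lemma transported_mixed t' : t' \in tsupp P' -> is_mixed (transported t').
Proof.
move=> t'P'; rewrite /transported; case: eqP => [_ | /eqP p_neq0].
  split=> [s|]; first by rewrite ffunE ler0n.
  rewrite (bigD1 s0) //= ffunE eqxx big1 ?addr0 // => s /negbTE s_neq0.
  by rewrite ffunE s_neq0.
have p_gt0 : 0 < tprob P' t' by rewrite lt_def p_neq0 tprob'_ge0.
split=> [s|]; first by rewrite ffunE divr_ge0 ?mass_ge0 ?ltW.
under eq_bigr do rewrite ffunE.
rewrite -mulr_suml exchange_big /= -(divff p_neq0) -(gam_sumr t'P'); congr (_ / _).
rewrite big_seq [RHS]big_seq; apply: eq_bigr => t tP.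
by rewrite -mulr_sumr; case: (g_mixed tP) => _ ->; rewrite mulr1.
Qed.

Lemma transported_C t' s : t' \in tsupp P' -> 0 < transported t' s -> C t' s.
Proof.
move=> t'P'; rewrite /transported; case: eqP => [_ | /eqP p_neq0].
  by rewrite ffunE; case: eqP => [-> _ | _]; [apply: C_s0 | rewrite ltxx].
have p_gt0 : 0 < tprob P' t' by rewrite lt_def p_neq0 tprob'_ge0.
rewrite ffunE pmulr_lgt0 ?invr_gt0 // => mass_gt0.
have : mass t' s != 0 by rewrite gt_eqF.
rewrite /mass big_seq psumr_neq0 => [/hasP [t tP /andP [_ prod_gt0]] | t tP].
  have gam_neq0 : gam t t' != 0 by apply: contraTneq prod_gt0 => ->; rewrite mul0r ltxx.
  have gam_gt0 : 0 < gam t t' by rewrite lt_def gam_neq0 gam_ge0.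
  apply: C_mono (gam_gt0_le tP t'P' gam_gt0) (g_C tP _).
  by rewrite -(pmulr_rgt0 _ gam_gt0).
by rewrite mulr_ge0 ?gam_ge0 //; case: (g_mixed tP).
Qed.

Lemma transported_average s :
  \sum_(t' <- tsupp P') tprob P' t' * transported t' s
    = \sum_(t <- tsupp P) tprob P t * g t s.
Proof.
rewrite big_seq (eq_bigr (mass^~ s)); last by move=> t' t'P'; apply: transported_scaled.
rewrite -big_seq exchange_big /= big_seq [RHS]big_seq; apply: eq_bigr => t tP.
by rewrite -mulr_suml gam_suml.
Qed.

Lemma transported_spec :
  [/\ forall t', t' \in tsupp P' -> is_mixed (transported t'),
      forall t', t' \in tsupp P' -> forall s, 0 < transported t' s -> C t' s &
      forall s, \sum_(t' <- tsupp P') tprob P' t' * transported t' s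
                = \sum_(t <- tsupp P) tprob P t * g t s].
Proof.
split=> [t' t'P'|t' t'P' s|s].
- exact: transported_mixed.
- exact: transported_C.
- exact: transported_average.
Qed.

End Transport.

Lemma mixed_argmax (R : realFieldType) (T : finType) (x : {ffun T -> R}) (f : T -> R) :
  is_mixed x -> exists s0, forall s, f s <= f s0.
Proof.
case=> _ sum_x; case: (pickP T) => [s1 _ | T0].
  by case: (arg_maxP f (isT : predT s1)) => s0 _ s0_max; exists s0 => s; apply: s0_max.
by move: sum_x; rewrite big_pred0 // => /eqP; rewrite eq_sym oner_eq0.
Qed.

Section Consistency.
Variables (R : realFieldType) (n : nat) (S : 'I_n -> finType).
Variables (u : 'I_n -> pprofile S -> R) (sigma : forall j, {ffun S j -> R}) (i : 'I_n).

Lemma consistent_le t t' si : t <= t' ->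
  consistent u sigma (i:=i) t si -> consistent u sigma (i:=i) t' si.
Proof. by move=> le_tt' t_best si'; rewrite (le_trans (t_best si')) ?lerD2l. Qed.

Lemma best_response_consistent t (s0 : S i) :
  (forall s : S i, upure u sigma s <= upure u sigma s0) -> 0 <= t ->
  consistent u sigma (i:=i) t s0.
Proof. by move=> s0_best t_ge0 s; rewrite (le_trans (s0_best s)) ?lerDl. Qed.

End Consistency.

Theorem theorem2p3 (R : realFieldType) (n : nat) (S : 'I_n -> finType)
  (u : 'I_n -> pprofile S -> R) (pi pi' : 'I_n -> tdist R)
  (Hpi : forall i, is_tdist (pi i)) (Hpi' : forall i, is_tdist (pi' i))
  (Hdom : stoch_dom_profile pi' pi)
  (sigma : forall j, {ffun S j -> R}) :
  tolerant_eq u pi sigma -> tolerant_eq u pi' sigma.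
Proof.
case=> sigma_mixed pi_eq; split=> // i.
have [g [g_mixed g_consistent g_avg]] := pi_eq i.
have [s0 s0_best] := mixed_argmax (upure u sigma (i:=i)) (sigma_mixed i).
have [_ tolerance'_ge0 _ _] := Hpi' i.
have [g'_mixed g'_consistent g'_avg] := transported_spec (C := @consistent R n S u sigma i) (s0 := s0)
  (@consistent_le _ _ _ u sigma i)
  (fun t' t'P' => best_response_consistent s0_best (tolerance'_ge0 t' t'P'))
  (quantile_coupling_ge0 (Hpi i) (Hpi' i))
  (quantile_coupling_suml (Hpi i) (Hpi' i))
  (quantile_coupling_sumr (Hpi i) (Hpi' i))
  (quantile_coupling_gt0_le (Hpi i) (Hpi' i) (Hdom i))
  g_mixed g_consistent.
exists (transported (pi i) (pi' i) (quantile_coupling (pi i) (pi' i)) g s0).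
by split=> // s; rewrite -g_avg.
Qed.
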